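(* Let $k\ge 0$, let $\Omega$ be any collection of functions, and let $\varphi$ be an expression of $\mathsf{TL}(\Omega)$ of treewidth at most $k$ whose free variables are among $x_1,\dots,x_{k+1}$. Then there is an expression $\varphi'\in\mathsf{TL}_{k+1}(\Omega)$ with $\mathrm{free}(\varphi')\subseteq\mathrm{free}(\varphi)$... more precisely with $[\![\varphi']\!]^\nu_G=[\![\varphi]\!]^\nu_G$ for every graph $G$ and every valuation $\nu$.
   Context: Fix integers $n\ge 1$ and $\ell\ge 1$. A graph is a triple $G=(V_G,E_G,\mathrm{col}_G)$ with $V_G=[n]$, $E_G$ a set of unordered pairs of distinct vertices, and $\mathrm{col}_G:V_G\to\mathbb R^\ell$. Tensor language $\mathsf{TL}(\Omega)$: $\Omega$ is a collection of functions $f:\mathbb R^p\to\mathbb R$ ($p\ge1$ depending on $f$). Expressions: $\varphi::=\mathbf 1_{x=y}\mid \mathbf 1_{x\neq y}\mid E(x,y)\mid P_s(x)\mid \varphi\cdot\varphi\mid \varphi+\varphi\mid a\cdot\varphi\mid f(\varphi_1,\dots,\varphi_p)\mid \sum_x\varphi$ ($s\in[\ell]$, $a\in\mathbb R$, $f\in\Omega$), with the usual free variables ($\sum_x$ binds $x$). Semantics for a graph $G$ and valuation $\nu$ into $V_G$: $[\![E(x,y)]\!]^\nu_G=1$ if $\nu(x)\nu(y)\in E_G$ else $0$; $[\![P_s(x)]\!]^\nu_G=\mathrm{col}_G(\nu(x))_s$; $[\![\mathbf 1_{x\,\mathrm{op}\,y}]\!]^\nu_G=1$ if $\nu(x)\,\mathrm{op}\,\nu(y)$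 else $0$; $\cdot,+,a\cdot,f$ act on values; $[\![\sum_x\varphi]\!]^\nu_G=\sum_{v\in V_G}[\![\varphi]\!]^{\nu[x\mapsto v]}_G$. $\mathsf{TL}_{k+1}(\Omega)$ is the set of expressions in which only variables from $\{x_1,\dots,x_{k+1}\}$ occur (free or bound; re-binding allowed). Conjunctive expressions and their treewidth. Allow, besides the atoms above, additional relation symbols $R$ of some arity $r$ (atoms $R(z_1,\dots,z_r)$, interpreted by arbitrary real-valued functions on $V_G^r$). A conjunctive expression is $\psi(\mathbf x)=\sum_{y_1}\cdots\sum_{y_p}\theta$, where $y_1,\dots,y_p$ are distinct variables not among the free variables $\mathbf x=(x_{i_1},\dots,x_{i_f})$, and $\theta$ is a product of atoms of the forms $E(z,z')$, $P_s(z)$, $\mathbf 1_{z=z'}$, $\mathbf 1_{z\ne z'}$, $R(z_1,\dots,z_r)$ with variables from $\mathbf x\cup\{y_1,\dots,y_p\}$. Its hypergraph $\mathcal H_\psi$ has vertex set $\mathbf x\cup\{y_1,\dots,y_p\}$, a multiset of hyperedges containing, for each atom, the set of variables occurring in it, and distinguished vertices $\mathbf x$. An elimination sequence is an ordering $v_1,\dots,v_N$ of the vertices with the $f$ distinguished ones first ($v_1,\dots,v_f$). Let $\mathcal E_N$ be the hyperedge multiset and, for $j=N,N-1,\dots,f+1$: $\partial(v_j)=\{F\in\mathcal E_j:v_j\in F\}$, $U_j=\bigcup_{F\in\partial(v_j)}F$, $\mathcal E_{j-1}=(\mathcal E_j\setminus\partial(v_j))\cup\{U_j\setminus\{v_j\}\}$.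 The induced width of the sequence is $f+\max_{f+1\le i\le N}|U_i\setminus\{v_1,\dots,v_f\}|-1$ (and $f-1$ if $N=f$). The treewidth of $\psi$ is the minimum induced width over its elimination sequences. Treewidth of arbitrary expressions (recursive on nesting of function applications): $\varphi\in\mathsf{TL}(\Omega)$ has treewidth at most $k$ if (a) the expression $\varphi_{\mathrm{nofun}}$, obtained from $\varphi$ by replacing each maximal subexpression of the form $f(\varphi_1,\dots,\varphi_p)$ by an atom $R_f(\mathbf z)$ with a fresh relation symbol, where $\mathbf z$ lists $\mathrm{free}(\varphi_1)\cup\dots\cup\mathrm{free}(\varphi_p)$, is equivalent (same value for all graphs, all interpretations of the fresh symbols and all valuations) to a finite linear combination $\sum_\alpha a_\alpha\psi_\alpha$, $a_\alpha\in\mathbb R$, of conjunctive expressions $\psi_\alpha$ each of treewidth at most $k$; and (b) every $\varphi_i$ occurring as an argument of such a maximal function application has treewidth at most $k$. *)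

From Stdlib Require Import Reals.
From mathcomp Require Import all_boot all_order all_algebra.
From mathcomp Require Import Rstruct.

Set Implicit Arguments.
Unset Strict Implicit.
Unset Printing Implicit Defensive.

Import Order.TTheory GRing.Theory Num.Theory.
Local Open Scope ring_scope.

(* Graphs on the vertex set [n] (represented by 'I_n) with colours in  *)
(* R^l (represented as 'I_l -> R).  Edges: a symmetric irreflexive     *)
(* adjacency relation (= a set of unordered pairs of distinct vertices).*)
Record graph (n l : nat) := Graph {
  adj : rel 'I_n;
  adj_sym : symmetric adj;
  adj_irr : irreflexive adj;
  col : 'I_n -> 'I_l -> R
}.

(* Variables are natural numbers: variable i stands for x_i.
   Valuations map every variable to a vertex. *)
Definition valuation (n : nat) := nat -> 'I_n.

Definition upd (n : nat) (nu : valuation n) (x : nat) (v : 'I_n) : valuation n :=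
  fun y => if y == x then v else nu y.

(* Expressions.  Omega is given by an index type F of function symbols *)
(* with arities ar : F -> nat and interpretations                      *)
(* fn f : R^(ar f) -> R.  Besides the constructors of TL(Omega) we      *)
(* include relation atoms RelA r zs (relation symbol r : nat applied to *)
(* the variable list zs), used for the "fresh relation symbols" in the  *)
(* definition of treewidth.  TL(Omega) = expressions without RelA.      *)
Inductive expr (l : nat) (F : Type) (ar : F -> nat) : Type :=
| EqA  of nat & nat
| NeqA of nat & nat
| EdgeA of nat & nat
| PA of 'I_l & nat
| Mul of expr l ar & expr l ar
| Add of expr l ar & expr l ar
| Scale of R & expr l ar
| App (f : F) of ('I_(ar f) -> expr l ar)
| Sum of nat & expr l ar
| RelA of nat & seq nat.

Arguments EqA {l F ar}.
Arguments NeqA {l F ar}.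
Arguments EdgeA {l F ar}.
Arguments PA {l F ar}.
Arguments Mul {l F ar}.
Arguments Add {l F ar}.
Arguments Scale {l F ar}.
Arguments App {l F ar}.
Arguments Sum {l F ar}.
Arguments RelA {l F ar}.

Section Expressions.
Variables (n l : nat) (F : Type) (ar : F -> nat)
          (fn : forall f : F, ('I_(ar f) -> R) -> R).

Local Notation expr := (expr l ar).

Definition rel_interp := nat -> seq 'I_n -> R.

Fixpoint eval (G : graph n l) (rho : rel_interp) (nu : valuation n) (e : expr)
  : R :=
  match e with
  | EqA x y => if nu x == nu y then 1 else 0
  | NeqA x y => if nu x != nu y then 1 else 0
  | EdgeA x y => if adj G (nu x) (nu y) then 1 else 0
  | PA s x => col G (nu x) s
  | Mul a b => eval G rho nu a * eval G rho nu b
  | Add a b => eval G rho nu a + eval G rho nu b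
  | Scale c a => c * eval G rho nu a
  | App f args => fn (fun i => eval G rho nu (args i))
  | Sum x a => \sum_(v : 'I_n) eval G rho (upd nu x v) a
  | RelA r zs => rho r [seq nu z | z <- zs]
  end.

Definition tl_eval (G : graph n l) (nu : valuation n) (e : expr) : R :=
  eval G (fun _ _ => 0) nu e.

Fixpoint fv (e : expr) : seq nat :=
  match e with
  | EqA x y | NeqA x y | EdgeA x y => [:: x; y]
  | PA _ x => [:: x]
  | Mul a b | Add a b => fv a ++ fv b
  | Scale _ a => fv a
  | App f args => flatten [seq fv (args i) | i <- enum 'I_(ar f)]
  | Sum x a => [seq y <- fv a | y != x]
  | RelA _ zs => zs
  end.

Fixpoint vars (e : expr) : seq nat :=
  match e with
  | EqA x y | NeqA x y | EdgeA x y => [:: x; y]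
  | PA _ x => [:: x]
  | Mul a b | Add a b => vars a ++ vars b
  | Scale _ a => vars a
  | App f args => flatten [seq vars (args i) | i <- enum 'I_(ar f)]
  | Sum x a => x :: vars a
  | RelA _ zs => zs
  end.

Fixpoint is_TL (e : expr) : Prop :=
  match e with
  | Mul a b | Add a b => is_TL a /\ is_TL b
  | Scale _ a | Sum _ a => is_TL a
  | App f args => forall i, is_TL (args i)
  | RelA _ _ => False
  | _ => True
  end.

Definition in_TLk (k : nat) (e : expr) : Prop :=
  is_TL e /\ all (fun x => (1 <= x <= k.+1)%N) (vars e).

Inductive atom :=
| AEq of nat & nat
| ANeq of nat & nat
| AEdge of nat & nat
| AP of 'I_l & nat
| ARel of nat & seq nat.

Definition atom_vars (a : atom) : seq nat :=
  match a with
  | AEq x y | ANeq x y | AEdge x y => undup [:: x; y]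
  | AP _ x => [:: x]
  | ARel _ zs => undup zs
  end.

Definition atom_eval (G : graph n l) (rho : rel_interp) (nu : valuation n)
  (a : atom) : R :=
  match a with
  | AEq x y => if nu x == nu y then 1 else 0
  | ANeq x y => if nu x != nu y then 1 else 0
  | AEdge x y => if adj G (nu x) (nu y) then 1 else 0
  | AP s x => col G (nu x) s
  | ARel r zs => rho r [seq nu z | z <- zs]
  end.

Record cq := CQ { cq_free : seq nat; cq_bound : seq nat; cq_atoms : seq atom }.

Definition cq_wf (q : cq) : bool :=
  [&& uniq (cq_free q), uniq (cq_bound q),
      all (fun y => y \notin cq_free q) (cq_bound q) &
      all (fun a => all (fun z => z \in cq_free q ++ cq_bound q) (atom_vars a))
          (cq_atoms q)].

Fixpoint cq_sem (G : graph n l) (rho : rel_interp) (ys : seq nat)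
  (atoms : seq atom) (nu : valuation n) : R :=
  match ys with
  | [::] => \prod_(a <- atoms) atom_eval G rho nu a
  | y :: ys' => \sum_(v : 'I_n) cq_sem G rho ys' atoms (upd nu y v)
  end.

Definition cq_eval (G : graph n l) (rho : rel_interp) (nu : valuation n) (q : cq)
  : R := cq_sem G rho (cq_bound q) (cq_atoms q) nu.

Definition cq_hyperedges (q : cq) : seq (seq nat) := map atom_vars (cq_atoms q).

Definition elim_seq (q : cq) (ord : seq nat) : bool :=
  uniq ord && perm_eq ord (cq_free q ++ cq_bound q)
  && perm_eq (take (size (cq_free q)) ord) (cq_free q).

(* running the elimination on vertices vs (in the given order, i.e.
   v_N, v_{N-1}, ..., v_{f+1}) starting from hyperedge multiset E;
   returns the list of the sets U_j *)
Fixpoint elim_U (E : seq (seq nat)) (vs : seq nat) : seq (seq nat) :=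
  match vs with
  | [::] => [::]
  | v :: vs' =>
      let dv := [seq Fe <- E | v \in Fe] in
      let U := undup (flatten dv) in
      U :: elim_U ([seq Fe <- E | v \notin Fe] ++ [:: [seq x <- U | x != v]]) vs'
  end.

(* induced width  f + max_{f+1 <= i <= N} |U_i \ {v_1..v_f}| - 1
   (the max over an empty range is 0, giving f - 1 when N = f) *)
Definition induced_width (q : cq) (ord : seq nat) : int :=
  let f := size (cq_free q) in
  let D := take f ord in
  let Us := elim_U (cq_hyperedges q) (rev (drop f ord)) in
  (Posz (f + foldr maxn 0%N [seq size [seq x <- U | x \notin D] | U <- Us])
     - 1)%R.

Definition cq_tw_le (k : nat) (q : cq) : Prop :=
  exists2 ord, elim_seq q ord & (induced_width q ord <= Posz k)%R.

(* phi_nofun: replace every maximal subexpression f(phi_1..phi_p) by a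
   relation atom with a fresh symbol (numbered c, c+1, ...) applied to
   the free variables of phi_1, ..., phi_p *)
Fixpoint nofun (c : nat) (e : expr) : expr * nat :=
  match e with
  | App f args => (RelA c (fv e), c.+1)
  | Mul a b => let: (a', c1) := nofun c a in
               let: (b', c2) := nofun c1 b in (Mul a' b', c2)
  | Add a b => let: (a', c1) := nofun c a in
               let: (b', c2) := nofun c1 b in (Add a' b', c2)
  | Scale x a => let: (a', c1) := nofun c a in (Scale x a', c1)
  | Sum x a => let: (a', c1) := nofun c a in (Sum x a', c1)
  | _ => (e, c)
  end.

Definition lincomb_tw_le (k : nat) (e : expr) : Prop :=
  exists cs : seq (R * cq),
    List.Forall (fun p : R * cq => cq_wf p.2 /\ cq_tw_le k p.2) cs /\
    forall (G : graph n l) (rho : rel_interp) (nu : valuation n),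
      eval G rho nu e = \sum_(p <- cs) p.1 * cq_eval G rho nu p.2.

(* treewidth at most k: condition (a) on phi_nofun and (b), recursively,
   for the arguments of maximal function applications *)
Fixpoint tw_le (k : nat) (e : expr) : Prop :=
  let fix args_ok (e' : expr) : Prop :=
    match e' with
    | App f args => forall i, tw_le k (args i)
    | Mul a b | Add a b => args_ok a /\ args_ok b
    | Scale _ a | Sum _ a => args_ok a
    | _ => True
    end in
  lincomb_tw_le k (nofun 0 e).1 /\ args_ok e.

End Expressions.

From Stdlib Require Import Reals.
From mathcomp Require Import all_boot all_order all_algebra.
From mathcomp Require Import Rstruct.
From Stdlib Require Import FunctionalExtensionality.

(* Along an elimination sequence of induced width at most k, a conjunctive expression
   is a nest of sums over a product of factors; summing out the innermost variable x
   replaces the factors containing x by one factor with scope U \ {x}.  Every factor is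
   expressible in TL_{k+1} under every admissible assignment of its variables to the
   slots x_1, ..., x_{k+1}: free variables keep prescribed (not necessarily distinct)
   slots, the other variables get distinct slots avoiding those.  As
   |free| + |U \ free| <= k + 1 and x lies in U \ free, the variables of U \ {x} leave a
   slot free for x, and the new factor is a sum over that slot.
   Maximal function applications become relation atoms interpreted by the semantics of
   their arguments, which are expressible by recursion on the nesting of applications;
   the arguments have to be placed on arbitrary, possibly repeated, slots, which is why
   expressibility is proved for every renaming of the free variables into slots. *)

Set Implicit Arguments.
Unset Strict Implicit.
Unset Printing Implicit Defensive.
Import Order.TTheory GRing.Theory Num.Theory.
Local Open Scope ring_scope.

Lemma In_filter (T : Type) (a : pred T) (s : seq T) x :
  List.In x [seq y <- s | a y] <-> a x /\ List.In x s.
Proof.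
elim: s => [|y s IH] /=; first by split=> [|[]].
case: (boolP (a y)) => ay /=; rewrite IH; split.
- by case=> [<-|[]]; auto.
- by case=> ax [->|]; auto.
- by case=> ax xs; auto.
- by case=> ax [yx|]; [move: ay; rewrite yx ax|].
Qed.

Lemma all_In (T : Type) (a : pred T) (s : seq T) x : all a s -> List.In x s -> a x.
Proof. by elim: s => //= y s IH /andP [ay /IH as_] [<-|/as_]. Qed.

Lemma mem_flatten_map (T : Type) (f : T -> seq nat) (s : seq T) x :
  reflect (exists2 y, List.In y s & x \in f y) (x \in flatten (map f s)).
Proof.
elim: s => [|y s IH] /=; first by right; case.
rewrite mem_cat; apply: (iffP orP) => [[xy|/IH [z zs xz]]|[z [<-|zs] xz]].
- by exists y; first left.
- by exists z; first right.
- by left.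
- by right; apply/IH; exists z.
Qed.

Lemma leq_foldr_maxn (s : seq nat) x : x \in s -> (x <= foldr maxn 0 s)%N.
Proof.
by move=> xs; rewrite (_ : foldr _ _ _ = \max_(y <- s) y) ?leq_bigmax_seq // unlock.
Qed.

Lemma eq_big_In (T : Type) (idx : T) (op : T -> T -> T) (I : Type) (s : seq I)
    (P : pred I) (F1 F2 : I -> T) :
  (forall i, List.In i s -> P i -> F1 i = F2 i) ->
  \big[op/idx]_(i <- s | P i) F1 i = \big[op/idx]_(i <- s | P i) F2 i.
Proof.
elim: s => [|i s IH] E; first by rewrite !big_nil.
rewrite !big_cons IH => [|j js]; last by apply: E; right.
by case: ifP => // Pi; rewrite E //; left.
Qed.

Section Semantics.
Variables (n l : nat) (F : Type) (ar : F -> nat)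
          (fn : forall f : F, ('I_(ar f) -> R) -> R).
Local Notation expr := (expr l ar).

Lemma eq_eval_fv (G : graph n l) (rho : rel_interp n) (e : expr) (nu nu' : valuation n) :
  {in fv e, nu =1 nu'} -> eval fn G rho nu e = eval fn G rho nu' e.
Proof.
elim: e nu nu' => /=
  [x y|x y|x y|s x|a IHa b IHb|a IHa b IHb|c a IHa|f args IH|x a IHa|r zs] nu nu' E;
  rewrite ?E ?inE ?eqxx ?orbT //.
1,2: by rewrite (IHa nu nu') ?(IHb nu nu') // => z zs; apply: E; rewrite mem_cat zs ?orbT.
- by rewrite (IHa nu nu').
- congr (fn _); apply: functional_extensionality => i; apply: IH => z zi.
  by apply: E; apply/flattenP; exists (fv (args i)); rewrite ?map_f ?mem_enum.
- apply: eq_bigr => v _; apply: IHa => z za; rewrite /upd.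
  by case: eqP => // /eqP zx; apply: E; rewrite mem_filter zx.
- by congr (rho r _); apply/eq_in_map.
Qed.

End Semantics.

Section Expressibility.
Variables (n l : nat) (F : Type) (ar : F -> nat)
          (fn : forall f : F, ('I_(ar f) -> R) -> R) (k : nat).
Local Notation expr := (expr l ar).
Local Notation slot x := (1 <= x <= k.+1)%N.

Definition expressible (h : graph n l -> valuation n -> R) :=
  exists2 e : expr, in_TLk k e & forall G nu, tl_eval fn G nu e = h G nu.

Lemma eq_expressible h h' : h =2 h' -> expressible h -> expressible h'.
Proof. by move=> E [e ek He]; exists e => // G nu; rewrite He E. Qed.

Lemma expressible_cst c : expressible (fun _ _ => c).
Proof.
exists (Scale c (EqA 1 1)); first by split.
by move=> G nu; rewrite /tl_eval /= eqxx RmultE mulr1.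
Qed.

Lemma expressible_mul h h' :
  expressible h -> expressible h' -> expressible (fun G nu => h G nu * h' G nu).
Proof.
move=> [e [eTL ek] He] [e' [eTL' ek'] He']; exists (Mul e e').
  by split; rewrite /= ?all_cat ?ek.
by move=> G nu; rewrite /tl_eval /= -!/(tl_eval _ _ _ _) He He'.
Qed.

Lemma expressible_add h h' :
  expressible h -> expressible h' -> expressible (fun G nu => h G nu + h' G nu).
Proof.
move=> [e [eTL ek] He] [e' [eTL' ek'] He']; exists (Add e e').
  by split; rewrite /= ?all_cat ?ek.
by move=> G nu; rewrite /tl_eval /= -!/(tl_eval _ _ _ _) He He'.
Qed.

Lemma expressible_prod (I : Type) (s : seq I) (h : I -> graph n l -> valuation n -> R) :
  (forall i, List.In i s -> expressible (h i)) ->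
  expressible (fun G nu => \prod_(i <- s) h i G nu).
Proof.
elim: s => [|i s IH] hs.
  by apply: eq_expressible (expressible_cst 1) => G nu; rewrite big_nil.
apply: eq_expressible (expressible_mul (hs i (or_introl erefl)) (IH _)) => [G nu|j js].
  by rewrite big_cons.
by apply: hs; right.
Qed.

Lemma expressible_sum (I : Type) (s : seq I) (h : I -> graph n l -> valuation n -> R) :
  (forall i, List.In i s -> expressible (h i)) ->
  expressible (fun G nu => \sum_(i <- s) h i G nu).
Proof.
elim: s => [|i s IH] hs.
  by apply: eq_expressible (expressible_cst 0) => G nu; rewrite big_nil.
apply: eq_expressible (expressible_add (hs i (or_introl erefl)) (IH _)) => [G nu|j js].
  by rewrite big_cons.
by apply: hs; right.
Qed.

Lemma expressible_sum_slot x h : slot x -> expressible h ->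
  expressible (fun G nu => \sum_(v : 'I_n) h G (upd nu x v)).
Proof.
move=> hx [e [eTL ek] He]; exists (Sum x e); first by split; rewrite /= ?hx.
by move=> G nu; apply: eq_bigr => v _; apply: He.
Qed.

Lemma expressible_app f (h : 'I_(ar f) -> graph n l -> valuation n -> R) :
  (forall i, expressible (h i)) ->
  expressible (fun G nu => fn (fun i => h i G nu)).
Proof.
move=> hs; have [es esk Hes] := fin_all_exists2 hs.
exists (App f es).
  split=> [i|]; first by case: (esk i).
  apply/allP => x /flattenP [_ /mapP [i _ ->]].
  by case: (esk i) => _ /allP; apply.
by move=> G nu; congr (fn _); apply: functional_extensionality => i; apply: Hes.
Qed.

End Expressibility.

Section VariableElimination.
Variables (n l : nat).

Lemma upd_comm (nu : valuation n) x y a b : x != y ->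
  upd (upd nu x a) y b = upd (upd nu y b) x a.
Proof.
move=> xy; apply: functional_extensionality => z; rewrite /upd.
by case: (eqVneq z y) => [->|]; [rewrite eq_sym (negbTE xy)|case: eqP].
Qed.

Fixpoint sum_over (ys : seq nat) (h : valuation n -> R) (nu : valuation n) : R :=
  if ys is y :: ys' then \sum_(v : 'I_n) sum_over ys' h (upd nu y v) else h nu.

Lemma eq_sum_over ys (h h' : valuation n -> R) : h =1 h' -> sum_over ys h =1 sum_over ys h'.
Proof. by move=> E; elim: ys => //= y ys IH nu; apply: eq_bigr => v _. Qed.

Lemma exchange_sum_over ys x (h : valuation n -> R) nu : x \notin ys ->
  \sum_(u : 'I_n) sum_over ys h (upd nu x u) =
  sum_over ys (fun nu => \sum_(u : 'I_n) h (upd nu x u)) nu.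
Proof.
elim: ys nu => //= y ys IH nu; rewrite inE negb_or => /andP [xy xys].
rewrite exchange_big; apply: eq_bigr => v _.
by rewrite -IH //; apply: eq_bigr => u _; rewrite upd_comm.
Qed.

Lemma sum_over_rem ys x (h : valuation n -> R) nu : uniq ys -> x \in ys ->
  sum_over ys h nu = sum_over (rem x ys) (fun nu => \sum_(u : 'I_n) h (upd nu x u)) nu.
Proof.
elim: ys nu => //= y ys IH nu /andP [yys ys_uniq].
case: (eqVneq y x) => [<- _|yx]; first exact: exchange_sum_over.
by rewrite inE eq_sym (negbTE yx) => xys; apply: eq_bigr => v _; apply: IH.
Qed.

Record factor := Factor { scope : seq nat; weight : graph n l -> valuation n -> R }.

Definition local (p : factor) := forall G (nu nu' : valuation n),
  {in scope p, nu =1 nu'} -> weight p G nu = weight p G nu'.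

Definition prodf (Fs : seq factor) G nu := \prod_(p <- Fs) weight p G nu.

Definition touching x (Fs : seq factor) := [seq p <- Fs | x \in scope p].

Definition elim_scope x (Fs : seq factor) := undup (flatten (map scope (touching x Fs))).

Definition sum_out x (Fs : seq factor) := Factor [seq y <- elim_scope x Fs | y != x]
  (fun G nu => \sum_(u : 'I_n) prodf (touching x Fs) G (upd nu x u)).

Definition eliminate x (Fs : seq factor) :=
  [seq p <- Fs | x \notin scope p] ++ [:: sum_out x Fs].

Lemma elim_U_scope x xs Fs :
  elim_U (map scope Fs) (x :: xs) =
  elim_scope x Fs :: elim_U (map scope (eliminate x Fs)) xs.
Proof. by rewrite /= /elim_scope /eliminate /touching map_cat !filter_map. Qed.

Lemma eq_prodf_on Fs G (nu nu' : valuation n) :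
  (forall p, List.In p Fs -> local p /\ {in scope p, nu =1 nu'}) ->
  prodf Fs G nu = prodf Fs G nu'.
Proof. by move=> E; apply: eq_big_In => p /E [p_loc ?] _; apply: p_loc. Qed.

Section LocalFactors.
Variable Fs : seq factor.
Hypothesis Fs_local : forall p, List.In p Fs -> local p.

Lemma prodf_upd_split G nu x u :
  prodf Fs G (upd nu x u) =
  prodf [seq p <- Fs | x \notin scope p] G nu * prodf (touching x Fs) G (upd nu x u).
Proof.
rewrite /prodf !big_filter (bigID (fun p => x \in scope p)) /= mulrC; congr (_ * _).
apply: eq_big_In => p pFs xp; apply: Fs_local => // y yp; rewrite /upd.
by case: eqP => // yx; move: xp; rewrite -yx yp.
Qed.

Lemma sum_prodf_upd G nu x :
  \sum_(u : 'I_n) prodf Fs G (upd nu x u) = prodf (eliminate x Fs) G nu.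
Proof.
under eq_bigr => u _ do rewrite prodf_upd_split.
by rewrite -mulr_sumr /prodf /eliminate big_cat big_seq1.
Qed.

Lemma sum_out_local x : local (sum_out x Fs).
Proof.
move=> G nu nu' E /=; apply: eq_bigr => u _.
apply: eq_prodf_on => p /[dup] /In_filter [xp pFs] ptouch.
split=> [|y yp]; first exact: Fs_local.
rewrite /upd; case: eqP => // /eqP yx; apply: E.
by rewrite mem_filter yx mem_undup; apply/mem_flatten_map; exists p.
Qed.

Lemma sum_over_eliminate ys x G nu : uniq ys -> x \in ys ->
  sum_over ys (prodf Fs G) nu = sum_over (rem x ys) (prodf (eliminate x Fs) G) nu.
Proof.
move=> ys_uniq xys; rewrite (sum_over_rem _ _ ys_uniq xys).
by apply: eq_sum_over => nu'; apply: sum_prodf_upd.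
Qed.

End LocalFactors.
End VariableElimination.

Arguments scope {n l}.
Arguments weight {n l}.

Section SlotAssignments.
Variables (n l : nat) (F : Type) (ar : F -> nat)
          (fn : forall f : F, ('I_(ar f) -> R) -> R) (k : nat).
Local Notation slot x := (1 <= x <= k.+1)%N.
Local Notation expressible := (expressible fn k).

Lemma exists_fresh_slot (L : seq nat) : (size L <= k)%N -> exists2 s, slot s & s \notin L.
Proof.
move=> L_small; case: (boolP (all (fun s => s \in L) (iota 1 k.+1))).
  move=> /allP /(uniq_leq_size (iota_uniq 1 k.+1)).
  by rewrite size_iota leqNgt ltnS L_small.
by case/allPn => s; rewrite mem_iota add1n => s_slot sL; exists s.
Qed.

Variables (sg : nat -> nat) (D : seq nat).
Hypothesis sg_slot : forall z, slot (sg z).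

Definition admissible (W : seq nat) (tau : nat -> nat) :=
  [/\ {in D, tau =1 sg}, {in W, forall x, slot (tau x)} &
      {in W, forall x, x \notin D -> {in W ++ D, forall y, tau x = tau y -> x = y}}].

Definition good (p : factor n l) := forall tau, admissible (scope p) tau ->
  expressible (fun G nu => weight p G (nu \o tau)).

Lemma admissible_sub W W' tau :
  {subset W <= W'} -> admissible W' tau -> admissible W tau.
Proof.
move=> sWW' [tauD tau_slot tau_inj]; split=> // [x /sWW'|x /sWW' xW' xD y yWD].
  exact: tau_slot.
by apply: tau_inj => //; move: yWD; rewrite !mem_cat => /orP [/sWW'->|->]; rewrite ?orbT.
Qed.

Lemma admissible_upd W tau x s :
  x \notin D -> slot s -> s \notin [seq tau y | y <- W ++ D] -> admissible W tau ->
  admissible (x :: W) (fun y => if y == x then s else tau y).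
Proof.
move=> xD s_slot s_fresh [tauD tau_slot tau_inj].
have tau_fresh y : y \in W ++ D -> tau y != s.
  by move=> yWD; apply: contraNneq s_fresh => <-; apply: map_f.
split=> [y yD|y|y yW yD z].
- by case: eqP => [yx|_]; [move: xD; rewrite -yx yD|apply: tauD].
- by rewrite inE; case: eqP => //= _; apply: tau_slot.
rewrite /= inE; case: (eqVneq y x) yW => [->|yx] //= yW.
  case: (eqVneq z x) => [-> //|zx] /= zWD sz.
  by move: (tau_fresh z zWD); rewrite -sz eqxx.
have {}yW : y \in W by move: yW; rewrite inE (negbTE yx).
case: (eqVneq z x) => [->|zx /= zWD]; last exact: tau_inj.
by move=> _ ys; move: (tau_fresh y); rewrite mem_cat yW ys eqxx => /(_ isT).
Qed.

Definition fits (U : seq nat) := (size D + size [seq y <- U | y \notin D] <= k.+1)%N.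

Lemma admissible_fresh_slot W tau : admissible W tau ->
  (size D + size [seq y <- W | y \notin D] <= k)%N ->
  exists2 s, slot s & s \notin [seq tau y | y <- W ++ D].
Proof.
move=> [tauD _ _] W_small.
have [|s s_slot sL] := @exists_fresh_slot ([seq tau y | y <- W & y \notin D] ++ map sg D).
  by rewrite size_cat !size_map addnC.
exists s => //; apply: contra sL => /mapP [y yWD ->]; rewrite mem_cat.
case: (boolP (y \in D)) => yD; first by rewrite tauD ?map_f ?orbT.
by rewrite map_f // mem_filter yD; move: yWD; rewrite mem_cat (negbTE yD) orbF.
Qed.

Lemma sum_out_good x Fs :
  x \notin D -> (forall p, List.In p Fs -> local p /\ good p) ->
  fits (elim_scope x Fs) -> good (sum_out x Fs).
Proof.
move=> xD Fs_ok U_fits tau tau_adm.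
set U := elim_scope x Fs; set W := scope (sum_out x Fs).
have touching_ok p : List.In p (touching x Fs) ->
    [/\ local p, good p, x \in scope p & {subset scope p <= U}].
  move=> /[dup] /In_filter [xp pFs] ptouch; have [? ?] := Fs_ok p pFs; split=> // y yp.
  by rewrite mem_undup; apply/mem_flatten_map; exists p.
case E: (touching x Fs) => [|p0 ps].
  apply: eq_expressible (expressible_cst n l fn k n%:R) => G nu /=.
  by rewrite E /prodf; under eq_bigr do rewrite big_nil; rewrite sumr_const card_ord.
have xU : x \in U.
  have p0_touch : List.In p0 (touching x Fs) by rewrite E; left.
  by have [_ _ xp0] := touching_ok p0 p0_touch; apply.
have [|s s_slot s_fresh] := admissible_fresh_slot tau_adm.
  have W_small : (size (x :: [seq y <- W | y \notin D]) <= size [seq y <- U | y \notin D])%N.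
    apply: uniq_leq_size => [|y].
      by rewrite /= mem_filter mem_filter eqxx andbF !filter_uniq ?undup_uniq.
    by rewrite inE => /predU1P [->|]; rewrite !mem_filter ?xD ?xU // => /and3P [-> _ ->].
  by rewrite -ltnS (leq_trans _ U_fits) // ltn_add2l.
pose tau' y := if y == x then s else tau y.
have tau'_adm : admissible U tau'.
  apply: admissible_sub (admissible_upd xD s_slot s_fresh tau_adm) => y yU.
  by rewrite inE mem_filter yU andbT orbN.
apply: eq_expressible (expressible_sum_slot s_slot (expressible_prod
  (h := fun p G nu => weight p G (nu \o tau')) (s := touching x Fs) _)) => [G nu|p pt].
  apply: eq_bigr => u _; apply: eq_prodf_on => p /touching_ok [p_loc _ _ pU].
  split=> // y /pU yU /=; rewrite /upd /tau'.
  case: (eqVneq y x) => [_|yx]; first by rewrite eqxx.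
  suff /negbTE -> : tau y != s by [].
  by apply: contraNneq s_fresh => <-; rewrite map_f // mem_cat mem_filter yx yU.
by have [_ p_good _ pU] := touching_ok p pt; apply/p_good/(admissible_sub pU).
Qed.

Definition factor_inv (xs : seq nat) (p : factor n l) :=
  [/\ local p, good p & {subset scope p <= D ++ xs}].

Lemma eliminate_inv x xs Fs :
  x \notin D -> fits (elim_scope x Fs) ->
  (forall p, List.In p Fs -> factor_inv (x :: xs) p) ->
  forall p, List.In p (eliminate x Fs) -> factor_inv xs p.
Proof.
move=> xD x_fits Fs_inv p /(List.in_app_or _ _ p) [/In_filter [xp pFs]|[<-|//]].
  have [p_loc p_good p_sub] := Fs_inv p pFs; split=> // y yp.
  move: (p_sub y yp); rewrite !mem_cat inE.
  by case: eqP => [yx|] //=; move: xp; rewrite -yx yp.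
have Fs_loc q : List.In q Fs -> local q by case/Fs_inv.
split.
- exact: sum_out_local.
- by apply: sum_out_good => // q /Fs_inv [].
- move=> y /=; rewrite mem_filter mem_undup => /andP [yx /mem_flatten_map [q]].
  move=> /In_filter [_ /Fs_inv [_ _ q_sub]] /q_sub.
  by rewrite !mem_cat inE (negbTE yx).
Qed.

Lemma expressible_sum_over xs Fs ys :
  uniq xs -> ys =i xs -> uniq ys -> {in xs, forall x, x \notin D} ->
  (forall p, List.In p Fs -> factor_inv xs p) -> all fits (elim_U (map scope Fs) xs) ->
  expressible (fun G nu => sum_over ys (prodf Fs G) (nu \o sg)).
Proof.
elim: xs Fs ys => [|x xs IH] Fs ys xs_uniq ys_xs ys_uniq xsD Fs_inv xs_fit.
  case: ys ys_xs {ys_uniq} => [_|y ys /(_ y)]; last by rewrite inE eqxx.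
  apply: expressible_prod => p /Fs_inv [_ p_good p_sub]; apply: p_good.
  split=> [//|y _|y /p_sub]; first exact: sg_slot.
  by rewrite cats0 => ->.
move: xs_uniq xs_fit; rewrite elim_U_scope /= => /andP [xxs xs_uniq] /andP [x_fits xs_fit].
have xD : x \notin D by apply: xsD; rewrite inE eqxx.
have xys : x \in ys by rewrite ys_xs inE eqxx.
have Fs_loc p : List.In p Fs -> local p by case/Fs_inv.
apply: eq_expressible (IH (eliminate x Fs) (rem x ys) _ _ _ _ _ _) => //.
- by move=> G nu; rewrite (sum_over_eliminate Fs_loc _ _ ys_uniq xys).
- move=> y; rewrite mem_rem_uniq // inE /= ys_xs inE.
  by case: (eqVneq y x) => [->|]; rewrite ?(negbTE xxs).
- exact: rem_uniq.
- by move=> y yxs; apply: xsD; rewrite inE yxs orbT.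
- exact: eliminate_inv.
Qed.

Lemma fits_induced_width (q : cq l) ord : cq_free q = D -> elim_seq q ord ->
  (induced_width q ord <= Posz k)%R ->
  all fits (elim_U (cq_hyperedges q) (rev (drop (size D) ord))).
Proof.
move=> qD /andP [_ take_free]; rewrite /induced_width qD lerBlDr -[1%R]/(Posz 1) -PoszD.
rewrite lez_nat addn1 => width; apply/allP => U UE; rewrite /fits.
set M := foldr _ _ _ in width; apply: leq_trans width; rewrite leq_add2l.
rewrite (eq_filter (a2 := fun y => y \notin take (size D) ord)).
  by apply: leq_foldr_maxn; apply: (map_f (fun U => size [seq y <- U | _]) UE).
by move=> y; rewrite -qD (perm_mem take_free).
Qed.

Section ConjunctiveExpressions.
Variable rhoG : graph n l -> rel_interp n.
Hypothesis rhoG_expressible : forall r s, all (fun z => slot z) s ->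
  expressible (fun G nu => rhoG G r (map nu s)).

Definition atom_factor (a : atom l) : factor n l :=
  Factor (atom_vars a) (fun G nu => atom_eval G (rhoG G) nu a).

Lemma atom_factor_local a : local (atom_factor a).
Proof.
case: a => [x y|x y|x y|s x|r zs] G nu nu' E /=; rewrite ?E ?mem_undup ?inE ?eqxx ?orbT //.
by congr (rhoG G r _); apply/eq_in_map => z zs_z; apply: E; rewrite mem_undup.
Qed.

Lemma atom_factor_good a : good (atom_factor a).
Proof.
move=> tau [_ tau_slot _]; case: a tau_slot => [x y|x y|x y|s x|r zs] tau_slot /=.
1-3: have [sx sy] : slot (tau x) /\ slot (tau y)
  by split; apply: tau_slot; rewrite /atom_vars mem_undup !inE eqxx ?orbT.
- by exists (EqA (tau x) (tau y)); first by split; rewrite //= sx sy.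
- by exists (NeqA (tau x) (tau y)); first by split; rewrite //= sx sy.
- by exists (EdgeA (tau x) (tau y)); first by split; rewrite //= sx sy.
- exists (PA s (tau x)) => //; split; rewrite //= andbT.
  by apply: tau_slot; rewrite /atom_vars inE.
- apply: eq_expressible (rhoG_expressible r (s := map tau zs) _) => [G nu|].
    by rewrite -map_comp.
  by apply/allP => _ /mapP [z zs_z ->]; apply: tau_slot; rewrite /atom_vars mem_undup.
Qed.

Lemma cq_sem_sum_over G ys atoms nu :
  cq_sem G (rhoG G) ys atoms nu = sum_over ys (prodf (map atom_factor atoms) G) nu.
Proof.
elim: ys nu => [|y ys IH] nu /=; last by apply: eq_bigr => v _; apply: IH.
by rewrite /prodf big_map.
Qed.

Lemma cq_expressible (q : cq l) ord :
  cq_free q = D -> cq_wf q -> elim_seq q ord -> (induced_width q ord <= Posz k)%R ->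
  expressible (fun G nu => cq_eval G (rhoG G) (nu \o sg) q).
Proof.
move=> qD /and4P [_ bound_uniq bound_free atoms_vars] ord_elim width.
have /andP [/andP [ord_uniq ord_perm] take_free] := ord_elim.
have drop_bound : perm_eq (drop (size D) ord) (cq_bound q).
  rewrite -(perm_cat2l (take (size D) ord)) cat_take_drop -qD.
  by apply: perm_trans ord_perm _; rewrite perm_cat2r perm_sym.
have bound_xs : cq_bound q =i rev (drop (size D) ord).
  by move=> y; rewrite mem_rev (perm_mem drop_bound).
apply: eq_expressible (expressible_sum_over (xs := rev (drop (size D) ord))
  (Fs := map atom_factor (cq_atoms q)) (ys := cq_bound q) _ _ _ _ _ _) => //.
- by move=> G nu; rewrite /cq_eval cq_sem_sum_over.
- by rewrite rev_uniq drop_uniq.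
- by move=> y; rewrite -bound_xs -qD; apply: (allP bound_free).
- move=> _ /List.in_map_iff [a [<- a_in]].
  split; [exact: atom_factor_local|exact: atom_factor_good|] => z z_a.
  by rewrite mem_cat -bound_xs -qD -mem_cat; apply: (allP (all_In atoms_vars a_in)).
- by rewrite -map_comp; apply: fits_induced_width.
Qed.

End ConjunctiveExpressions.
End SlotAssignments.

Section FunctionApplications.
Variables (n l : nat) (F : Type) (ar : F -> nat)
          (fn : forall f : F, ('I_(ar f) -> R) -> R) (k : nat) (v0 : 'I_n).
Local Notation expr := (expr l ar).
Local Notation slot x := (1 <= x <= k.+1)%N.
Local Notation expressible := (expressible fn k).

Definition slot_expressible (e : expr) := forall sg, (forall z, slot (sg z)) ->
  expressible (fun (G : graph n l) nu => tl_eval fn G (nu \o sg) e).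

Fixpoint apps (e : expr) : seq expr :=
  match e with
  | App _ _ => [:: e]
  | Mul a b | Add a b => apps a ++ apps b
  | Scale _ a | Sum _ a => apps a
  | _ => [::]
  end.

Local Notation d0 := (EqA 0 0 : expr).

Lemma slot_expressible_d0 : slot_expressible d0.
Proof.
move=> sg _; apply: eq_expressible (expressible_cst n l fn k 1) => G nu.
by rewrite /tl_eval /= eqxx.
Qed.

Lemma nofun_counter (e : expr) c : (nofun c e).2 = (c + size (apps e))%N.
Proof.
elim: e c => [x y|x y|x y|s x|a IHa b IHb|a IHa b IHb|r a IHa|f args _|x a IHa|r zs] c /=;
  rewrite ?addn0 ?addn1 //.
1,2: case: (nofun c a) (IHa c) => a' _ /= ->;
  by case: (nofun _ b) (IHb (c + size (apps a))%N) => b' _ /= ->; rewrite size_cat addnA.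
1,2: by case: (nofun c a) (IHa c) => a' _ /= ->.
Qed.

Definition interprets (G : graph n l) (rho : rel_interp n) c (es : seq expr) :=
  forall i, (i < size es)%N -> forall nu,
    rho (c + i)%N (map nu (fv (nth d0 es i))) = tl_eval fn G nu (nth d0 es i).

Lemma interprets_cat G rho c s1 s2 : interprets G rho c (s1 ++ s2) ->
  interprets G rho c s1 /\ interprets G rho (c + size s1) s2.
Proof.
move=> E; split=> i i_lt nu.
  by have := E i _ nu; rewrite size_cat nth_cat i_lt ltn_addr //; apply.
have := E (size s1 + i)%N _ nu; rewrite size_cat ltn_add2l nth_cat addnA.
by rewrite (ltnNge (size s1 + i)) leq_addr addKn; apply.
Qed.

Lemma eval_nofun (e : expr) c G rho nu : is_TL e -> interprets G rho c (apps e) ->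
  eval fn G rho nu (nofun c e).1 = tl_eval fn G nu e.
Proof.
elim: e c nu
  => [x y|x y|x y|s x|a IHa b IHb|a IHa b IHb|r a IHa|f args _|x a IHa|r zs] c nu //= eTL.
1,2: case: eTL => aTL bTL /interprets_cat [ia ib];
  move: (nofun_counter a c) (IHa c nu aTL ia) (IHb _ nu bTL ib);
  case: (nofun c a) => a' c1 /= -> Ea; case: (nofun _ b) => b' c2 /= Eb.
1,2: by rewrite Ea Eb.
- by move=> ia; move: (IHa c nu eTL ia); case: (nofun c a) => a' c1 /= ->.
- by move=> /(_ 0%N isT nu); rewrite addn0.
- move=> ia; case: (nofun c a) (IHa c) => a' c1 /= IH'.
  by apply: eq_bigr => v _; apply: IH'.
Qed.

(* The length guard keeps [nth v0] from ever returning the constant vertex [v0], which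
   no expression denotes. *)
Definition app_interp (a : expr) (G : graph n l) (t : seq 'I_n) : R :=
  if size t == size (fv a) then tl_eval fn G (fun z => nth v0 t (index z (fv a))) a else 0.

Lemma app_interp_fv a G nu : app_interp a G (map nu (fv a)) = tl_eval fn G nu a.
Proof.
rewrite /app_interp size_map eqxx; apply: eq_eval_fv => z z_a.
by rewrite (nth_map 0%N) ?index_mem // nth_index.
Qed.

Lemma app_interp_expressible a s : slot_expressible a -> all (fun z => slot z) s ->
  expressible (fun G nu => app_interp a G (map nu s)).
Proof.
move=> a_expr s_slot; have [s_size|s_size] := eqVneq (size s) (size (fv a)); last first.
  apply: eq_expressible (expressible_cst n l fn k 0) => G nu.
  by rewrite /app_interp size_map (negbTE s_size).
pose sg z := nth 1%N s (index z (fv a)).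
have sg_slot z : slot (sg z).
  rewrite /sg; case: (ltnP (index z (fv a)) (size s)) => [z_lt|?]; last by rewrite nth_default.
  by apply: (allP s_slot); rewrite mem_nth.
apply: eq_expressible (a_expr sg sg_slot) => G nu.
rewrite /app_interp size_map s_size eqxx; apply: eq_eval_fv => z z_a.
by rewrite /= /sg (nth_map 1%N) // s_size index_mem.
Qed.

Definition apps_interp (e : expr) (G : graph n l) : rel_interp n :=
  fun r => app_interp (nth d0 (apps e) r) G.

Lemma interprets_apps_interp e G : interprets G (apps_interp e G) 0 (apps e).
Proof. by move=> i _ nu; rewrite add0n; apply: app_interp_fv. Qed.

Lemma lincomb_slot_expressible e : is_TL e -> lincomb_tw_le n fn k (nofun 0 e).1 ->
  (forall i, slot_expressible (nth d0 (apps e) i)) -> slot_expressible e.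
Proof.
move=> eTL [cs [cs_ok cs_eq]] apps_ok sg sg_slot.
have rho_ok r s : all (fun z => slot z) s ->
    expressible (fun G nu => apps_interp e G r (map nu s)).
  exact: app_interp_expressible.
apply: eq_expressible (expressible_sum (s := cs)
  (h := fun p G nu => p.1 * cq_eval G (apps_interp e G) (nu \o sg) p.2) _) => [G nu|p p_cs].
  by rewrite -(eval_nofun _ eTL (@interprets_apps_interp e G)) cs_eq.
have [p_wf [ord p_ord p_width]] := (List.Forall_forall _ _).1 cs_ok p p_cs.
exact: expressible_mul (expressible_cst _ _ _ _ _)
  (cq_expressible sg_slot rho_ok _ p_wf p_ord p_width).
Qed.

Fixpoint args_tw_le (e : expr) : Prop :=
  match e with
  | App f args => forall i, tw_le n fn k (args i)
  | Mul a b | Add a b => args_tw_le a /\ args_tw_le b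
  | Scale _ a | Sum _ a => args_tw_le a
  | _ => True
  end.

Lemma tw_le_unfold e :
  tw_le n fn k e -> lincomb_tw_le n fn k (nofun 0 e).1 /\ args_tw_le e.
Proof. by case: e. Qed.

Lemma apps_slot_expressible e : is_TL e -> args_tw_le e ->
  forall i, slot_expressible (nth d0 (apps e) i).
Proof.
elim: e => [x y|x y|x y|s x|a IHa b IHb|a IHa b IHb|r a IHa|f args IH|x a IHa|r zs] //=;
  try by move=> *; rewrite nth_nil; apply: slot_expressible_d0.
1,2: move=> [aTL bTL] [a_ok b_ok] i; rewrite nth_cat.
1,2: by case: ifP => _; [apply: IHa|apply: IHb].
move=> argsTL args_tw [|i] /=; last by rewrite nth_nil; apply: slot_expressible_d0.
move=> sg sg_slot; apply: eq_expressible
  (expressible_app (h := fun j G nu => tl_eval fn G (nu \o sg) (args j)) _) => [//|j].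
have [lin ok] := tw_le_unfold (args_tw j).
exact: lincomb_slot_expressible (argsTL j) lin (IH j (argsTL j) ok) sg sg_slot.
Qed.

Lemma tw_le_slot_expressible e : is_TL e -> tw_le n fn k e -> slot_expressible e.
Proof.
move=> eTL /tw_le_unfold [lin ok].
exact: lincomb_slot_expressible (apps_slot_expressible eTL ok).
Qed.

End FunctionApplications.

Theorem proposition2
  (n l : nat) (hn : (1 <= n)%N) (hl : (1 <= l)%N)
  (F : Type) (ar : F -> nat) (fn : forall f : F, ('I_(ar f) -> R) -> R)
  (har : forall f : F, (1 <= ar f)%N)
  (k : nat) (phi : expr l ar) :
  is_TL phi ->
  tw_le n fn k phi ->
  all (fun x => (1 <= x <= k.+1)%N) (fv phi) ->
  exists phi' : expr l ar,
    in_TLk k phi' /\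
    forall (G : graph n l) (nu : valuation n),
      tl_eval fn G nu phi' = tl_eval fn G nu phi.
Proof.
move=> phiTL phi_tw phi_fv.
pose sg z := if (1 <= z <= k.+1)%N then z else 1%N.
have sg_slot z : (1 <= sg z <= k.+1)%N by rewrite /sg; case: ifP.
have [phi' phi'_TL phi'_eval] := tw_le_slot_expressible (Ordinal hn) phiTL phi_tw sg_slot.
exists phi'; split=> // G nu; rewrite phi'_eval; apply: eq_eval_fv => z z_phi.
by rewrite /= /sg (allP phi_fv z z_phi).
Qed.
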